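(* Let $(n^{-*},n^{+*})$ be a global optimum of $\max\{\Phi(n^-,n^+): n^-,n^+\in\mathbb{N}\cup\{0\},\ n^-+n^+=N\}$ and suppose the optimal value $\Phi^*=\Phi(n^{-*},n^{+*})$ is positive. Then for every global optimum $(w^{-*},w^{+*})$ of problem $P(n^{-*},n^{+*})$ we have $w^{-*}_i\ne 0$ for all $i\in\{1,\dots,n^{-*}\}$ and $w^{+*}_j\ne 0$ for all $j\in\{1,\dots,n^{+*}\}$.
   Context: Lottery with $N\in\mathbb{N}$ tickets, each outcome having probability $1/N$. Parameters $\alpha,\beta\in(0,1)$, $\lambda>0$; value function $U(x)=x^\alpha$ for $x\ge0$ and $U(x)=-\lambda(-x)^\beta$ for $x<0$. A function $f:[0,1]\to\mathbb{R}$ is inverse S-shaped if it is strictly increasing, continuously differentiable, and there is $x_0\in[0,1]$ such that $f'$ is strictly decreasing on $[0,x_0]$ and strictly increasing on $[x_0,1]$; $W^+,W^-:[0,1]\to[0,1]$ are inverse S-shaped with value $0$ at $0$ and $1$ at $1$. For $n^-+n^+=N$, set $h^-_i=W^-(i/N)-W^-((i-1)/N)$ ($i\le n^-$) and $h^+_j=W^+((n^+-j+1)/N)-W^+((n^+-j)/N)$ ($j\le n^+$). Problem $P(n^-,n^+)$: maximize $\sum_{i=1}^{n^-}(-w^-_i)-\sum_{j=1}^{n^+}w^+_j$ over $w^-\in\mathbb{R}^{n^-}$, $w^+\in\mathbb{R}^{n^+}$ subject to $\sum_{i=1}^{n^-}h^-_iU(w^-_i)+\sum_{j=1}^{n^+}h^+_jU(w^+_j)\ge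 0$, $0\le w^+_1\le\cdots\le w^+_{n^+}$, and $w^-_1\le\cdots\le w^-_{n^-}\le 0$. $\Phi(n^-,n^+)$ denotes its optimal value (with $\Phi(0,N)=\Phi(N,0)=0$). *)

From HB Require Import structures.
From mathcomp Require Import all_boot all_order all_algebra.
From mathcomp Require Import all_classical all_reals all_analysis.
Set Implicit Arguments. Unset Strict Implicit. Unset Printing Implicit Defensive.
Import Order.TTheory GRing.Theory Num.Theory.
Import numFieldNormedType.Exports.
Local Open Scope classical_set_scope.
Local Open Scope ring_scope.

Section Lottery.
Variable R : realType.

Definition Uval (alpha beta lam : R) (x : R) : R :=
  if 0 <= x then x `^ alpha else - lam * ((- x) `^ beta).

(* inverse S-shaped on [0,1] (f is given on R; only its behaviour at
   points of [0,1] matters) *)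
Definition inverse_S_shaped (f : R -> R) : Prop :=
  (forall x y, 0 <= x -> x < y -> y <= 1 -> f x < f y) /\
  (forall x, 0 <= x <= 1 -> derivable f x 1) /\
  {within [set x | 0 <= x <= 1], continuous (derive1 f)} /\
  exists x0, 0 <= x0 <= 1 /\
    (forall x y, 0 <= x -> x < y -> y <= x0 -> derive1 f y < derive1 f x) /\
    (forall x y, x0 <= x -> x < y -> y <= 1 -> derive1 f x < derive1 f y).

Definition prob_weight (W : R -> R) : Prop :=
  inverse_S_shaped W /\ W 0 = 0 /\ W 1 = 1.

(* decision weights, 1-based indices *)
Definition hm (N : nat) (Wm : R -> R) (i : nat) : R :=
  Wm (i%:R / N%:R) - Wm (i.-1%:R / N%:R).
Definition hp (N : nat) (Wp : R -> R) (np j : nat) : R :=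
  Wp ((np - j).+1%:R / N%:R) - Wp ((np - j)%:R / N%:R).

Definition objP (nm np : nat) (wm wp : nat -> R) : R :=
  \sum_(1 <= i < nm.+1) (- wm i) - \sum_(1 <= j < np.+1) wp j.

Definition feasibleP (N : nat) (alpha beta lam : R) (Wm Wp : R -> R)
    (nm np : nat) (wm wp : nat -> R) : Prop :=
  [/\ 0 <= \sum_(1 <= i < nm.+1) hm N Wm i * Uval alpha beta lam (wm i)
          + \sum_(1 <= j < np.+1) hp N Wp np j * Uval alpha beta lam (wp j),
      ((0 < np)%N -> 0 <= wp 1%N),
      (forall j, (1 <= j < np)%N -> wp j <= wp j.+1),
      (forall i, (1 <= i < nm)%N -> wm i <= wm i.+1) &
      ((0 < nm)%N -> wm nm <= 0)].

Definition globalOptP N alpha beta lam Wm Wp nm np (wm wp : nat -> R) : Prop :=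
  feasibleP N alpha beta lam Wm Wp nm np wm wp /\
  forall vm vp, feasibleP N alpha beta lam Wm Wp nm np vm vp ->
    objP nm np vm vp <= objP nm np wm wp.

(* v is the optimal value Phi(nm, np) (supremum of the objective over the
   feasible set), with the convention Phi(0,N) = Phi(N,0) = 0 *)
Definition PhiIs N alpha beta lam Wm Wp (nm np : nat) (v : R) : Prop :=
  if (nm == 0)%N || (np == 0)%N then v = 0 else
  (forall wm wp, feasibleP N alpha beta lam Wm Wp nm np wm wp ->
     objP nm np wm wp <= v) /\
  (forall u, (forall wm wp, feasibleP N alpha beta lam Wm Wp nm np wm wp ->
     objP nm np wm wp <= u) -> v <= u).

(* Phi(nm, np) <= v  (Phi may be +infinity, in which case this fails) *)
Definition PhiLe N alpha beta lam Wm Wp (nm np : nat) (v : R) : Prop :=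
  if (nm == 0)%N || (np == 0)%N then is_true (0 <= v) else
  forall wm wp, feasibleP N alpha beta lam Wm Wp nm np wm wp ->
     objP nm np wm wp <= v.

End Lottery.

From HB Require Import structures.
From mathcomp Require Import all_boot all_order all_algebra.
From mathcomp Require Import all_classical all_reals all_analysis.
From mathcomp Require Import ring lra zify.
Set Implicit Arguments. Unset Strict Implicit. Unset Printing Implicit Defensive.
Import Order.TTheory GRing.Theory Num.Theory.
Local Open Scope ring_scope.

(* Since Phi* > 0 and gains are nonnegative, the smallest outcome w-_1 of an
   optimum is a strict loss, of size A > 0.  If some gain vanishes, so does the
   smallest one, w+_1.  Raising every gain by e > 0 and deepening w-_1 by
   d = (n+ + 1) e improves the objective by e, and it stays feasible: the loss
   in value is at most linear in d near -A, whereas the first gain gains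
   e^alpha, which dominates any multiple of e for small e because alpha < 1.
   If instead some loss vanishes, so does the last one, w-_(n-); turning it
   into a zero gain gives a feasible point of P(n- - 1, n+ + 1) with the same
   value, which the same perturbation pushes above Phi*. *)

Section Reals.
Variable R : realType.

Lemma powR_fixed_slope (a M : R) : a != 1 -> 0 < M ->
  exists2 e : R, 0 < e & e `^ a = e * M.
Proof.
move=> a1 M0; have a10 : a - 1 != 0 by rewrite subr_eq0.
have e0 : 0 < M `^ (a - 1)^-1 by exact: powR_gt0.
exists (M `^ (a - 1)^-1) => //.
rewrite -[X in _ `^ X = _](subrK 1 a).
rewrite powRD; last by rewrite implybE (gt_eqF e0) orbT.
by rewrite -powRrM mulVf // !powRr1 ?ltW // mulrC.
Qed.

Lemma powRD_le_linear (b A d : R) : b <= 1 -> 0 < A -> 0 <= d ->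
  (A + d) `^ b <= A `^ b + A `^ b / A * d.
Proof.
move=> b1 A0 d0; have dA0 : 0 <= d / A by rewrite divr_ge0 // ltW.
have -> : A + d = A * (1 + d / A) by field; rewrite gt_eqF.
rewrite powRM ?(ltW A0) ?addr_ge0 //.
have /ler1_powR/(_ b1) le1 : 1 <= 1 + d / A by rewrite lerDl.
apply: le_trans (ler_wpM2l (powR_ge0 _ _) le1) _.
by rewrite mulrDr mulr1 mulrA mulrAC.
Qed.

Lemma nondecreasing_range_le (v : nat -> R) n :
  (forall i, (1 <= i < n)%N -> v i <= v i.+1) ->
  forall i k, (1 <= i <= k)%N -> (k <= n)%N -> v i <= v k.
Proof.
move=> hv i k /andP [i1 ik] kn.
pose D := [pred j | 0 < j <= n]%N.
have convexD : {in D &, forall p q r, (p < r < q)%N -> r \in D}.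
  by move=> p q /andP [? ?] /andP [? ?] r /andP [? ?]; apply/andP; lia.
have stepD : {in D, forall j, j.+1 \in D -> v j <= v j.+1}.
  by move=> j /andP [j1 _] /andP [_ jn]; apply: hv; rewrite j1.
have iD : i \in D by rewrite inE /= i1 (leq_trans ik kn).
have kD : k \in D by rewrite inE /= kn (leq_trans i1 ik).
exact: (homo_leq_in le_refl (fun _ _ _ => @le_trans _ _ _ _ _) convexD stepD).
Qed.

End Reals.

Section Value.
Variables (R : realType) (alpha beta lam : R).
Local Notation U := (Uval alpha beta lam).

Lemma Uval0 : alpha != 0 -> U 0 = 0.
Proof. by move=> a0; rewrite /Uval lexx powR0. Qed.

Lemma UvalE_ge0 x : 0 <= x -> U x = x `^ alpha.
Proof. by move=> x0; rewrite /Uval x0. Qed.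

Lemma UvalE_lt0 x : x < 0 -> U x = - lam * (- x) `^ beta.
Proof. by move=> x0; rewrite /Uval leNgt x0. Qed.

Lemma ler_Uval x y : 0 <= alpha -> 0 <= x -> x <= y -> U x <= U y.
Proof.
move=> a0 x0 xy; have y0 := le_trans x0 xy.
by rewrite !UvalE_ge0 // ge0_ler_powR.
Qed.

End Value.

Section Weights.
Variables (R : realType) (N : nat) (W : R -> R).
Hypothesis pW : prob_weight W.

Lemma prob_weight_step_gt0 k : (k < N)%N ->
  0 < W (k.+1%:R / N%:R) - W (k%:R / N%:R).
Proof.
move: pW => [[W_incr _] _] kN.
have N0 : 0 < N%:R :> R by rewrite ltr0n (leq_ltn_trans _ kN).
rewrite subr_gt0 W_incr ?divr_ge0 ?ler_pdivrMr ?mul1r ?ler_nat //.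
by rewrite ltr_pM2r ?invr_gt0 // ltr_nat.
Qed.

Lemma hm_gt0 i : (0 < i <= N)%N -> 0 < hm N W i.
Proof. by case: i => // i iN; apply: prob_weight_step_gt0. Qed.

Lemma hp_gt0 np j : (0 < j <= np)%N -> (np <= N)%N -> 0 < hp N W np j.
Proof. by move=> /andP [j0 jn] nN; apply: prob_weight_step_gt0; lia. Qed.

End Weights.

Definition shift_gains {V : nmodType} (vp : nat -> V) (j : nat) : V :=
  if j == 1%N then 0 else vp j.-1.

Section Feasible.
Variables (R : realType) (N : nat) (alpha beta lam : R) (Wm Wp : R -> R).
Hypothesis alpha01 : 0 < alpha < 1.
Hypothesis beta01 : 0 < beta < 1.
Hypothesis lam0 : 0 < lam.
Hypothesis pWm : prob_weight Wm.
Hypothesis pWp : prob_weight Wp.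
Local Notation U := (Uval alpha beta lam).
Local Notation feasible := (feasibleP N alpha beta lam Wm Wp).

Let alpha_neq0 : alpha != 0. Proof. by case/andP: alpha01 => /gt_eqF ->. Qed.
Let alpha_neq1 : alpha != 1. Proof. by case/andP: alpha01 => _ /lt_eqF ->. Qed.
Let alpha_ge0 : 0 <= alpha. Proof. by case/andP: alpha01 => /ltW. Qed.

Lemma first_loss_lt0 nm np vm vp :
  feasible nm np vm vp -> 0 < objP nm np vm vp -> vm 1%N < 0.
Proof.
move=> [_ gain1_ge0 gainsP lossesP _] obj_gt0.
rewrite ltNge; apply/negP => vm1_ge0.
have losses_le0 : \sum_(1 <= i < nm.+1) - vm i <= 0.
  rewrite big_nat_cond sumr_le0 // => i /andP [/andP [i1 ilt] _].
  by rewrite oppr_le0 (le_trans vm1_ge0) // (nondecreasing_range_le lossesP).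
have gains_ge0 : 0 <= \sum_(1 <= j < np.+1) vp j.
  rewrite big_nat_cond sumr_ge0 // => j /andP [/andP [j1 jlt] _].
  rewrite (le_trans (gain1_ge0 (leq_trans j1 jlt))) //.
  exact: (nondecreasing_range_le gainsP).
by move: obj_gt0; rewrite /objP; lra.
Qed.

(* Gain weights are indexed from the top rank, so putting a new smallest gain
   in front leaves the weights of the old gains unchanged. *)
Lemma feasible_shift nm np vm vp :
  feasible nm.+1 np vm vp -> vm nm.+1 = 0 ->
  feasible nm np.+1 vm (shift_gains vp) /\
  objP nm np.+1 vm (shift_gains vp) = objP nm.+1 np vm vp.
Proof.
move=> [utilU gain1_ge0 gainsP lossesP _] vm0.
have lossU : \sum_(1 <= i < nm.+2) hm N Wm i * U (vm i)
           = \sum_(1 <= i < nm.+1) hm N Wm i * U (vm i).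
  by rewrite big_nat_recr //= vm0 Uval0 // mulr0 addr0.
have gainU : \sum_(1 <= j < np.+2) hp N Wp np.+1 j * U (shift_gains vp j)
           = \sum_(1 <= j < np.+1) hp N Wp np j * U (vp j).
  rewrite big_ltn // /shift_gains eqxx Uval0 // mulr0 add0r big_add1 /=.
  by apply: eq_big_nat => -[|j] //= _; rewrite /hp subSS.
have lossO : \sum_(1 <= i < nm.+2) - vm i = \sum_(1 <= i < nm.+1) - vm i.
  by rewrite big_nat_recr //= vm0 oppr0 addr0.
have gainO : \sum_(1 <= j < np.+2) shift_gains vp j = \sum_(1 <= j < np.+1) vp j.
  rewrite big_ltn // /shift_gains eqxx add0r big_add1 /=.
  by apply: eq_big_nat => -[|j].
split; last by rewrite /objP lossO gainO.
split.
- by rewrite gainU -lossU.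
- by rewrite /shift_gains eqxx.
- move=> j /andP [j1 jn]; rewrite /shift_gains.
  by case: j j1 jn => [|[|j]] // _ jn; apply: gainsP.
- by move=> i /andP [i1 ilt]; apply: lossesP; rewrite i1 ltnW.
- by move=> nm0; rewrite -vm0 lossesP // nm0 /=.
Qed.

Lemma feasible_improve_zero_gain nm np vm vp :
  (0 < nm)%N -> (0 < np)%N -> (nm + np)%N = N ->
  feasible nm np vm vp -> vp 1%N = 0 -> vm 1%N < 0 ->
  exists vm' vp', feasible nm np vm' vp' /\ objP nm np vm vp < objP nm np vm' vp'.
Proof.
move=> nm0 np0 eN [utilU _ gainsP lossesP lossN_le0] vp1 vm1.
have nm1 : (1 < nm.+1)%N := nm0; have np1 : (1 < np.+1)%N := np0.
have npN : (np <= N)%N by rewrite -eN leq_addl.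
pose A := - vm 1%N; have A0 : 0 < A by rewrite oppr_gt0.
pose hm1 := hm N Wm 1%N.
have hm1_gt0 : 0 < hm1 by apply: (hm_gt0 pWm); rewrite -eN ltn_addr.
pose hp1 := hp N Wp np 1%N; have hp1_gt0 : 0 < hp1 by rewrite (hp_gt0 pWp) ?np0.
pose K := hm1 * lam * (A `^ beta / A).
have K0 : 0 < K by rewrite !mulr_gt0 ?invr_gt0 ?powR_gt0.
(* Calibrate e by e^alpha = e M, so that the value hp1 e^alpha of the first
   gain equals K d, the linear bound on the extra loss of value. *)
have [e e0 e_slope] : exists2 e, 0 < e & e `^ alpha = e * (K * np.+1%:R / hp1).
  by apply: powR_fixed_slope; rewrite // divr_gt0 // mulr_gt0 // ltr0n.
pose d := np.+1%:R * e; have d0 : 0 < d by rewrite mulr_gt0 ?ltr0n.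
pose vm' i := if i == 1%N then vm 1%N - d else vm i.
pose vp' j := vp j + e.
have vm'_tail (F : nat -> R -> R) :
    \sum_(2 <= i < nm.+1) F i (vm' i) = \sum_(2 <= i < nm.+1) F i (vm i).
  by apply: eq_big_nat => i /andP [i2 _]; rewrite /vm' gtn_eqF.
have vp_ge0 j : (0 < j <= np)%N -> 0 <= vp j.
  by move=> /andP [j0 jn]; rewrite -vp1 (nondecreasing_range_le gainsP) ?j0.
exists vm', vp'; split; last first.
  rewrite /objP !(big_ltn nm1) (vm'_tail (fun _ x => - x)) /vm' eqxx.
  rewrite big_split sumr_const_nat /= subn1 /= /d mulrSr -mulr_natr; lra.
split.
- have lossU : \sum_(1 <= i < nm.+1) hm N Wm i * U (vm' i)
      >= \sum_(1 <= i < nm.+1) hm N Wm i * U (vm i) - K * d.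
    rewrite !(big_ltn nm1) (vm'_tail (fun i x => hm N Wm i * U x)) /vm' eqxx.
    have vm1d : vm 1%N - d < 0 by rewrite subr_lt0 (lt_trans vm1).
    rewrite addrAC lerD2r !UvalE_lt0 //.
    have -> : - (vm 1%N - d) = A + d by rewrite /A opprB addrC.
    have := powRD_le_linear (ltW (andP beta01).2) A0 (ltW d0).
    move=> /(ler_wpM2l (ltW (mulr_gt0 hm1_gt0 lam0))).
    rewrite -/hm1 -/A /K; lra.
  have gainU : \sum_(1 <= j < np.+1) hp N Wp np j * U (vp' j)
      >= \sum_(1 <= j < np.+1) hp N Wp np j * U (vp j) + K * d.
    rewrite !(big_ltn np1) /vp' vp1 add0r Uval0 // mulr0 add0r.
    rewrite UvalE_ge0 ?(ltW e0) // e_slope addrC lerD //.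
      rewrite -/hp1 (_ : hp1 * _ = K * d) //.
      by rewrite /d; field; rewrite gt_eqF.
    apply: ler_sum_nat => j /andP [j2 jn].
    have j_range : (0 < j <= np)%N by rewrite (ltnW j2) -ltnS.
    apply: ler_wpM2l; first exact/ltW/(hp_gt0 pWp j_range npN).
    by rewrite ler_Uval ?lerDl ?(ltW e0) ?vp_ge0.
  lra.
- by move=> _; rewrite /vp' vp1 add0r ltW.
- by move=> j hj; rewrite /vp' lerD2r gainsP.
- move=> [|[|i]] // /andP [_ ilt]; rewrite /vm' /=.
    by rewrite lerBlDr (le_trans (lossesP 1%N _)) ?lerDl ?ltW.
  exact: lossesP.
- move=> _; rewrite /vm'; case: eqP => _; last exact: lossN_le0.
  by rewrite subr_le0 (le_trans (ltW vm1)) ?ltW.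
Qed.

Lemma feasible_improve_zero_loss nm np vm vp :
  (nm.+2 + np)%N = N -> feasible nm.+2 np vm vp -> vm nm.+2 = 0 -> vm 1%N < 0 ->
  exists vm' vp', feasible nm.+1 np.+1 vm' vp' /\
    objP nm.+2 np vm vp < objP nm.+1 np.+1 vm' vp'.
Proof.
move=> eN feas vm0 vm1; have [feas_shift <-] := feasible_shift feas vm0.
apply: feasible_improve_zero_gain => //; by rewrite -eN addnS.
Qed.

End Feasible.

Theorem proposition1 (R : realType) (N : nat) (alpha beta lam : R)
    (Wm Wp : R -> R) (nms nps : nat) (Phis : R) :
  0 < alpha < 1 -> 0 < beta < 1 -> 0 < lam ->
  prob_weight Wm -> prob_weight Wp ->
  (nms + nps)%N = N ->
  PhiIs N alpha beta lam Wm Wp nms nps Phis ->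
  (forall nm np, (nm + np)%N = N -> PhiLe N alpha beta lam Wm Wp nm np Phis) ->
  0 < Phis ->
  forall wm wp : nat -> R, globalOptP N alpha beta lam Wm Wp nms nps wm wp ->
    (forall i, (1 <= i <= nms)%N -> wm i != 0) /\
    (forall j, (1 <= j <= nps)%N -> wp j != 0).
Proof.
move=> a01 b01 lam0 pWm pWp eN hPhi hLe Phi0 wm wp [feas opt].
move: hPhi; rewrite /PhiIs; case: ifP => [_ Phi_eq0 | /negbT].
  by move: Phi0; rewrite Phi_eq0 ltxx.
rewrite negb_or -!lt0n => /andP [nm0 np0] [_ Phi_lub].
have Phi_le_obj : Phis <= objP nms nps wm wp := Phi_lub _ opt.
have wm1 : wm 1%N < 0.
  by apply: (first_loss_lt0 feas); apply: lt_le_trans Phi_le_obj.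
have [_ gain1_ge0 gainsP lossesP lossN_le0] := feas.
split=> [i /andP [i1 iN] | j /andP [j1 jN]]; apply/eqP.
- move=> wmi0; have wm_last : wm nms = 0.
    apply/le_anti/andP; split; first exact: lossN_le0.
    by rewrite -wmi0; apply: (nondecreasing_range_le lossesP); rewrite ?i1.
  have [a nms_eq] : exists a, nms = a.+2.
    exists nms.-2; move: nm0 wm_last; case: (nms) => [|[|a]] // _ wm1_eq0.
    by move: wm1; rewrite wm1_eq0 ltxx.
  subst nms; have eN' : (a.+1 + nps.+1)%N = N by rewrite -eN addnS.
  have [vm' [vp' [feas' obj_lt]]] :=
    feasible_improve_zero_loss a01 b01 lam0 pWm pWp eN feas wm_last wm1.
  have := hLe _ _ eN'; rewrite /PhiLe /= => /(_ _ _ feas'); lra.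
- move=> wpj0; have wp1 : wp 1%N = 0.
    apply/le_anti/andP; split; last exact: gain1_ge0.
    by rewrite -wpj0; apply: (nondecreasing_range_le gainsP); rewrite ?j1.
  have [vm' [vp' [feas' obj_lt]]] :=
    feasible_improve_zero_gain a01 b01 lam0 pWm pWp nm0 np0 eN feas wp1 wm1.
  by move: (opt _ _ feas'); lra.
Qed.
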